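(* Let $(E,\tau)$ be a locally solid vector lattice such that $\tau$ is metrisable and complete. Then $\tau$ is locally interval complete solidly submetrisable.
   Context: All vector lattices are real and Archimedean; linear topologies are Hausdorff. A locally solid topology on a vector lattice is a linear topology such that zero has a neighbourhood basis of solid sets. For $x\in E$, $B_x$ denotes the band generated by $x$. A locally solid topology $\tau$ on $E$ is locally interval complete solidly submetrisable if for every $x\in E^+$ there exists a metrisable locally solid topology $\widetilde\tau_x$ on $B_x$ such that (a) $\tau|_{B_x}$ is finer than $\widetilde\tau_x$, and (b) every $\widetilde\tau_x$-Cauchy sequence in the order interval $[0,x]$ is $\widetilde\tau_x$-convergent to an element of $[0,x]$. *)

(* vector lattice = real lmodType with an explicit order relation,
   topologies represented set-theoretically (families of open sets). *)
From HB Require Import structures.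
From mathcomp Require Import all_boot all_order all_algebra.
From mathcomp Require Import boolp classical_sets reals.

Set Implicit Arguments.
Unset Strict Implicit.
Unset Printing Implicit Defensive.

Import Order.TTheory GRing.Theory Num.Theory.
Local Open Scope ring_scope.
Local Open Scope classical_set_scope.

Section VectorLatticeDefs.
Variables (R : realType) (E : lmodType R).

Variable le : E -> E -> Prop.

Definition is_sup (D : set E) (s : E) : Prop :=
  (forall y, D y -> le y s) /\
  (forall u, (forall y, D y -> le y u) -> le s u).

Definition is_inf (D : set E) (i : E) : Prop :=
  (forall y, D y -> le i y) /\
  (forall u, (forall y, D y -> le u y) -> le u i).

Definition vector_lattice : Prop :=
  [/\ (forall x, le x x),
      (forall x y, le x y -> le y x -> x = y) &
      (forall x y z, le x y -> le y z -> le x z)] /\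
  [/\ (forall x y z, le x y -> le (x + z) (y + z)) &
      (forall (a : R) x, 0 <= a -> le 0 x -> le 0 (a *: x))] /\
  [/\ (forall x y, exists s, is_sup [set x; y] s) &
      (forall x y, exists i, is_inf [set x; y] i)] /\
  (forall x y, le 0 x -> (forall n : nat, le (x *+ n) y) -> x = 0).

Definition is_abs (x a : E) : Prop := is_sup [set x; - x] a.

Definition solid (A : set E) : Prop :=
  forall x y ax ay : E, A x -> is_abs x ax -> is_abs y ay -> le ay ax -> A y.

Definition lin_subspace (A : set E) : Prop :=
  A 0 /\ (forall x y, A x -> A y -> A (x + y)) /\
  (forall (a : R) x, A x -> A (a *: x)).


Definition ideal (A : set E) : Prop := lin_subspace A /\ solid A.

Definition band (A : set E) : Prop :=
  ideal A /\ (forall (D : set E) (s : E), D `<=` A -> is_sup D s -> A s).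

Definition band_gen (x : E) : set E :=
  [set y | forall B : set E, band B -> B x -> B y].

Definition order_interval (x : E) : set E :=
  [set y | le 0 y /\ le y x].

Definition topology_on (S : set E) (O : set (set E)) : Prop :=
  (forall U, O U -> U `<=` S) /\ O S /\ O set0 /\
  (forall F : set (set E), F `<=` O -> O (\bigcup_(U in F) U)) /\
  (forall U V, O U -> O V -> O (U `&` V)).

Definition tnbhs (O : set (set E)) (x : E) (U : set E) : Prop :=
  exists V, [/\ O V, V x & V `<=` U].

Definition hausdorff_on (S : set E) (O : set (set E)) : Prop :=
  forall x y, S x -> S y -> x <> y ->
    exists U V, [/\ O U, O V, U x, V y & U `&` V = set0].

(* linear (Hausdorff) topology on the linear subspace S: addition S x S -> S
   and scalar multiplication R x S -> S are continuous (product topologies) *)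
Definition linear_topology_on (S : set E) (O : set (set E)) : Prop :=
  [/\ lin_subspace S, topology_on S O, hausdorff_on S O,
   (forall x y, S x -> S y -> forall W, tnbhs O (x + y) W ->
      exists U V, [/\ tnbhs O x U, tnbhs O y V &
        forall u v, S u -> S v -> U u -> V v -> W (u + v)]) &
   (forall (a : R) x, S x -> forall W, tnbhs O (a *: x) W ->
      exists (e : R) U, [/\ 0 < e, tnbhs O x U &
        forall (b : R) u, `|b - a| < e -> S u -> U u -> W (b *: u)])].

Definition locally_solid_on (S : set E) (O : set (set E)) : Prop :=
  linear_topology_on S O /\
  forall U, tnbhs O 0 U -> exists V, [/\ tnbhs O 0 V, V `<=` S, solid V & V `<=` U].

Definition metrisable_on (S : set E) (O : set (set E)) : Prop :=
  exists dist : E -> E -> R,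
  [/\ (forall x y, S x -> S y -> 0 <= dist x y),
      (forall x y, S x -> S y -> (dist x y = 0 <-> x = y)),
      (forall x y, S x -> S y -> dist x y = dist y x),
      (forall x y z, S x -> S y -> S z -> dist x z <= dist x y + dist y z) &
      (forall U, O U <-> (U `<=` S /\
          forall x, U x -> exists2 e : R, 0 < e &
            [set y | S y /\ dist x y < e] `<=` U))].

Definition proper_filter_on (S : set E) (F : set (set E)) : Prop :=
  [/\ F S, ~ F set0,
      (forall A B, F A -> F B -> F (A `&` B)) &
      (forall A B, F A -> A `<=` B -> F B)].

(* Cauchy filters / sequences w.r.t. the uniformity of the linear topology *)
Definition cauchy_filter (O : set (set E)) (F : set (set E)) : Prop :=
  forall U, tnbhs O 0 U -> exists2 A, F A & forall a b, A a -> A b -> U (a - b).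

Definition filter_converges (O : set (set E)) (F : set (set E)) (x : E) : Prop :=
  forall U, tnbhs O x U -> F U.

Definition complete_on (S : set E) (O : set (set E)) : Prop :=
  forall F, proper_filter_on S F -> cauchy_filter O F ->
    exists2 x, S x & filter_converges O F x.

Definition cauchy_seq (O : set (set E)) (u : nat -> E) : Prop :=
  forall U, tnbhs O 0 U ->
    exists N : nat, forall m n, (N <= m)%N -> (N <= n)%N -> U (u n - u m).

Definition seq_converges (O : set (set E)) (u : nat -> E) (x : E) : Prop :=
  forall U, tnbhs O x U -> exists N : nat, forall n, (N <= n)%N -> U (u n).

Definition subspace_topology (O : set (set E)) (B : set E) : set (set E) :=
  [set U | exists2 V, O V & U = V `&` B].

Definition finer (O1 O2 : set (set E)) : Prop := O2 `<=` O1.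

Definition lics_submetrisable (O : set (set E)) : Prop :=
  forall x : E, le 0 x ->
    exists Ox : set (set E),
    [/\ locally_solid_on (band_gen x) Ox,
        metrisable_on (band_gen x) Ox,
        finer (subspace_topology O (band_gen x)) Ox &
        forall u : nat -> E, (forall n, order_interval x (u n)) ->
          cauchy_seq Ox u ->
          exists2 y, order_interval x y & seq_converges Ox u y].

End VectorLatticeDefs.

From mathcomp Require Import all_boot all_order all_algebra.
From mathcomp Require Import boolp classical_sets reals.
From mathcomp Require Import lra.

(* The band B_x is an ideal, so the restriction of tau to B_x is again a metrisable
   locally solid topology; take it as the submetrisable topology.  A Cauchy
   sequence in [0, x] for it is tau-Cauchy, hence tau-convergent by completeness,
   and its limit stays in [0, x]: if a <= |z| for z arbitrarily close to 0, then
   a \/ 0 lies in every solid neighbourhood of 0, so a <= 0 by Hausdorffness. *)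

Set Implicit Arguments.
Unset Strict Implicit.
Unset Printing Implicit Defensive.

Import GRing.Theory Num.Theory.
Local Open Scope ring_scope.
Local Open Scope classical_set_scope.

Section VectorLattice.
Variables (R : realType) (E : lmodType R) (le : E -> E -> Prop).

Lemma band_gen_lin_subspace x : lin_subspace (band_gen le x).
Proof.
split; first by move=> B [[[]]].
split.
- move=> y z By Bz B bandB Bx; case: (bandB) => [[[_ [Badd _]] _] _].
  by apply: Badd; [apply: By | apply: Bz].
- move=> a y By B bandB Bx; case: (bandB) => [[[_ [_ Bscale]] _] _].
  by apply: Bscale; apply: By.
Qed.

Lemma band_gen_solid x : solid le (band_gen le x).
Proof.
move=> y z ay az By y_ay z_az le_az_ay B bandB Bx.
by case: (bandB) => [[_ solidB] _]; apply: solidB (By B bandB Bx) y_ay z_az le_az_ay.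
Qed.

Hypothesis VL : vector_lattice le.

Lemma vl_le_trans x y z : le x y -> le y z -> le x z.
Proof. by case: VL => [[_ _ le_tr] _]; apply: le_tr. Qed.

Lemma le_add2r x y z : le (x + z) (y + z) <-> le x y.
Proof.
have le_addr a b c : le a b -> le (a + c) (b + c).
  by move=> le_ab; case: VL => _ [[le_add _] _]; apply: le_add.
split=> [|/le_addr //]; move/(le_addr _ _ (- z)).
by rewrite !addrK.
Qed.

Lemma le_subr0 x y : le (x - y) 0 <-> le x y.
Proof.
by split=> [|le_xy]; [move/(le_add2r _ _ y) | apply/(le_add2r _ _ y)];
  rewrite subrK add0r.
Qed.

Lemma le_sub2l z x y : le x y -> le (z - y) (z - x).
Proof.
move=> le_xy; rewrite ![z - _]addrC; apply/le_add2r.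
by apply/(le_add2r _ _ (x + y)); rewrite addrCA addNr addr0 addKr.
Qed.

Lemma is_abs_ge z a : is_abs le z a -> [/\ le z a, le (- z) a & le 0 a].
Proof.
move=> [ub _].
have le_za : le z a by apply: ub; left.
have le_Nza : le (- z) a by apply: ub; right.
split=> //.
have le_0_2a : le 0 (a + a).
  apply: (vl_le_trans (y := a - z)).
    by apply/(le_add2r _ _ z); rewrite add0r subrK.
  by rewrite addrC; apply/le_add2r.
have -> : a = 2^-1 *: (a + a).
  by rewrite -mulr2n -scaler_nat scalerA mulVf ?scale1r // pnatr_eq0.
case: VL => _ [[_ le_scale]] _; apply: le_scale => //.
by rewrite invr_ge0 ler0n.
Qed.

Lemma is_abs_id v : le 0 v -> is_abs le v v.
Proof.
move=> le0v; split=> [y [->|->] | u ub]; last by apply: ub; left.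
- by case: VL => [[le_refl]].
- by apply: (vl_le_trans (y := 0)) => //; apply/(le_add2r _ _ v); rewrite addNr add0r.
Qed.

Lemma order_interval_sub_band_gen x : le 0 x -> order_interval le x `<=` band_gen le x.
Proof.
move=> le0x v [le0v levx].
have Bx : band_gen le x x by [].
exact: (band_gen_solid Bx (is_abs_id le0x) (is_abs_id le0v) levx).
Qed.

End VectorLattice.

Section SubspaceTopology.
Variables (R : realType) (E : lmodType R) (O : set (set E)) (B : set E).
Local Notation OB := (subspace_topology O B).

Lemma tnbhs_subspace x U : B x -> tnbhs O x U -> tnbhs OB x U.
Proof.
move=> Bx [V [oV Vx VU]]; exists (V `&` B); split=> //; first by exists V.
by move=> y [/VU].
Qed.

Lemma tnbhs_subspaceP x U : tnbhs OB x U -> exists W, tnbhs O x W /\ W `&` B `<=` U.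
Proof.
move=> [V [[W oW eV] Vx VU]]; rewrite eV in Vx VU; case: Vx => Wx _.
by exists W; split=> //; exists W; split.
Qed.

Lemma subspace_topology_on : topology_on setT O -> topology_on B OB.
Proof.
move=> [_ [OT [O0 [O_bigcup O_setI]]]]; split; first by move=> U [V _ ->] y [].
split; first by exists setT => //; rewrite setTI.
split; first by exists set0 => //; rewrite set0I.
split.
- move=> F F_OB; exists (\bigcup_(W in [set W | O W /\ F (W `&` B)]) W).
    by apply: O_bigcup => W [].
  apply/seteqP; split=> [y [U FU Uy] | y [[W [oW FW] Wy] By]]; last by exists (W `&` B).
  have [W oW eU] := F_OB U FU; rewrite eU in FU Uy; case: Uy => Wy By.
  by split=> //; exists W.
- move=> _ _ [U oU ->] [V oV ->]; exists (U `&` V); first exact: O_setI.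
  by rewrite setIACA setIid.
Qed.

Lemma subspace_hausdorff : hausdorff_on setT O -> hausdorff_on B OB.
Proof.
move=> sepO x y Bx By neq_xy.
have [U [V [oU oV Ux Vy UV0]]] := sepO x y I I neq_xy.
exists (U `&` B), (V `&` B); split; [by exists U | by exists V | by [] | by [] |].
by rewrite setIACA UV0 set0I.
Qed.

Lemma subspace_linear_topology :
  lin_subspace B -> linear_topology_on setT O -> linear_topology_on B OB.
Proof.
move=> linB [_ topO sepO contD contZ]; have [_ [B_add B_scale]] := linB.
split=> //; first exact: subspace_topology_on.
- exact: subspace_hausdorff.
- move=> x y Bx By W /tnbhs_subspaceP [W' [nW' W'W]].
  have [U [V [nU nV UV_W']]] := contD x y I I W' nW'.
  exists U, V; split; [exact: tnbhs_subspace | exact: tnbhs_subspace |].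
  by move=> u v Bu Bv Uu Vv; apply: W'W; split; [exact: UV_W' | exact: B_add].
- move=> a x Bx W /tnbhs_subspaceP [W' [nW' W'W]].
  have [e [U [e0 nU U_W']]] := contZ a x I W' nW'.
  exists e, U; split=> //; first exact: tnbhs_subspace.
  by move=> b u ba Bu Uu; apply: W'W; split; [exact: U_W' | exact: B_scale].
Qed.

Lemma subspace_locally_solid (le : E -> E -> Prop) :
  lin_subspace B -> solid le B -> locally_solid_on le setT O ->
  locally_solid_on le B OB.
Proof.
move=> linB solidB [linO solid_basis]; split; first exact: subspace_linear_topology.
move=> U /tnbhs_subspaceP [W [nW WB_U]].
have [V [nV _ solidV VW]] := solid_basis W nW.
exists (V `&` B); split.
- case: nV => V' [oV' V'0 V'V]; exists (V' `&` B); split; first by exists V'.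
    by split=> //; case: linB.
  by move=> y [/V'V].
- by move=> ? [].
- move=> y z ay az [Vy By] y_ay z_az le_az_ay.
  by split; [apply: solidV Vy _ _ _ | apply: solidB By _ _ _]; eassumption.
- by move=> y [Vy By]; apply: WB_U; split=> //; apply: VW.
Qed.

Lemma subspace_metrisable : metrisable_on setT O -> metrisable_on B OB.
Proof.
move=> [d [d_ge0 d_eq0 d_sym d_tri openO]].
exists d; split=> [x y _ _ | x y _ _ | x y _ _ | x y z _ _ _ | U].
- exact: d_ge0.
- exact: d_eq0.
- exact: d_sym.
- exact: d_tri.
split.
- move=> [V oV ->]; split=> [y [] // | y [Vy By]].
  have [_ ballsV] := (openO V).1 oV; have [e e0 ballV] := ballsV y Vy.
  by exists e => // z [Bz dz]; split=> //; apply: ballV.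
- move=> [UB U_open].
  pose V := [set z | exists x e, [/\ U x, 0 < e,
              [set y | B y /\ d x y < e] `<=` U & d x z < e]].
  exists V.
    apply/openO; split=> // z [x [e [Ux e0 ballU dz]]].
    exists (e - d x z); first by rewrite subr_gt0.
    move=> w [_ dw]; exists x, e; split=> //.
    by have := d_tri x z w I I I; lra.
  apply/seteqP; split=> [z Uz | z [[x [e [_ _ ballU dz]]] Bz]]; last exact: ballU.
  split; last exact: UB.
  have [e e0 ballU] := U_open z Uz; exists z, e; split=> //.
  by rewrite (d_eq0 z z I I).2.
Qed.

Lemma cauchy_seq_subspace u : B 0 -> cauchy_seq OB u -> cauchy_seq O u.
Proof. by move=> B0 cu U nU; apply: cu; exact: tnbhs_subspace. Qed.

Lemma seq_converges_subspace u y :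
  (forall n, B (u n)) -> seq_converges O u y -> seq_converges OB u y.
Proof.
move=> Bu conv U /tnbhs_subspaceP [W [nW WB_U]].
have [N uW] := conv W nW.
by exists N => n leNn; apply: WB_U; split; [exact: uW | exact: Bu].
Qed.

End SubspaceTopology.

Section Sequences.
Variables (R : realType) (E : lmodType R) (O : set (set E)).

Definition tail_filter (u : nat -> E) : set (set E) :=
  [set A | exists N, forall n, (N <= n)%N -> A (u n)].

Lemma tail_filter_proper u : proper_filter_on setT (tail_filter u).
Proof.
split; first by exists 0%N.
- by move=> [N uN]; apply: (uN N).
- move=> A1 A2 [N1 uA1] [N2 uA2]; exists (maxn N1 N2) => n.
  by rewrite geq_max => /andP[le1 le2]; split; [exact: uA1 | exact: uA2].
- by move=> A1 A2 [N uA1] A12; exists N => n leNn; apply/A12/uA1.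
Qed.

Lemma cauchy_tail_filter u : cauchy_seq O u -> cauchy_filter O (tail_filter u).
Proof.
move=> cu U nU; have [N uU] := cu U nU.
exists [set a | exists2 n, (N <= n)%N & a = u n]; first by exists N => n; exists n.
by move=> _ _ [n leNn ->] [m leNm ->]; exact: uU.
Qed.

Lemma complete_cauchy_seq_converges u :
  complete_on setT O -> cauchy_seq O u -> exists y, seq_converges O u y.
Proof.
move=> compO cu.
by have [y _ conv] := compO _ (tail_filter_proper u) (cauchy_tail_filter cu); exists y.
Qed.

Lemma seq_converges_sub_near0 u y : linear_topology_on setT O ->
  seq_converges O u y -> forall W, tnbhs O 0 W -> exists n, W (u n - y).
Proof.
move=> [_ _ _ contD _] conv W nW.
have nW' : tnbhs O (y - y) W by rewrite subrr.
have [U [V [nU [V' [_ V'Ny V'V]] UV_W]]] := contD y (- y) I I W nW'.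
have [N uU] := conv U nU.
by exists N; apply: UV_W => //; [exact: uU | exact: V'V].
Qed.

End Sequences.

Section ClosedOrderInterval.
Variables (R : realType) (E : lmodType R) (le : E -> E -> Prop) (O : set (set E)).
Hypotheses (VL : vector_lattice le) (LS : locally_solid_on le setT O).

Lemma le0_of_le_abs_near0 a :
  (forall W, tnbhs O 0 W -> exists z az, [/\ W z, is_abs le z az & le a az]) ->
  le a 0.
Proof.
move=> small; have [[_ _ sepO _ _] solid_basis] := LS.
have [s [s_ub s_least]] : exists s, is_sup le [set a; 0] s.
  by case: VL => _ [_ [[sup2 _] _]]; apply: sup2.
have le0s : le 0 s by apply: s_ub; right.
suff s0 : s = 0 by rewrite -s0; apply: s_ub; left.
apply: contrapT => s_neq0.
have [U [V [_ oV Us V0 UV0]]] := sepO s 0 I I s_neq0.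
have [W [nW _ solidW WV]] := solid_basis V (ex_intro _ V (And3 oV V0 (@subset_refl _ V))).
have [z [az [Wz z_az le_a_az]]] := small W nW.
have [_ _ le0az] := is_abs_ge VL z_az.
have le_s_az : le s az by apply: s_least => _ [->|->].
have Ws : W s by apply: solidW Wz z_az (is_abs_id VL le0s) le_s_az.
have : (U `&` V) s by split=> //; apply: WV.
by rewrite UV0.
Qed.

Lemma order_interval_closed x u y : (forall n, order_interval le x (u n)) ->
  seq_converges O u y -> order_interval le x y.
Proof.
move=> u_in conv; have [linO _] := LS.
have le0_of_le_near a : (forall n, le a (u n - y) \/ le a (- (u n - y))) -> le a 0.
  move=> le_a; apply: le0_of_le_abs_near0 => W nW.
  have [n Wz] := seq_converges_sub_near0 linO conv nW.
  have [az z_az] : exists az, is_abs le (u n - y) az.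
    by case: VL => _ [_ [[sup2 _] _]]; apply: sup2.
  have [le_z le_Nz _] := is_abs_ge VL z_az.
  by exists (u n - y), az; split=> //; case: (le_a n) => /(vl_le_trans VL); apply.
split.
- apply/(le_subr0 VL 0 y); apply: le0_of_le_near => n; left.
  by apply/(le_add2r VL); case: (u_in n).
- apply/(le_subr0 VL y x); apply: le0_of_le_near => n; right.
  by rewrite opprB; apply: (le_sub2l VL); case: (u_in n).
Qed.

End ClosedOrderInterval.

Theorem proposition3p8 (R : realType) (E : lmodType R)
  (le : E -> E -> Prop) (O : set (set E)) :
  vector_lattice le ->
  locally_solid_on le setT O -> metrisable_on setT O -> complete_on setT O ->
  lics_submetrisable le O.
Proof.
move=> VL LS metO compO x le0x.
have linB := band_gen_lin_subspace le x.
exists (subspace_topology O (band_gen le x)); split.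
- exact: subspace_locally_solid linB (@band_gen_solid _ _ le x) LS.
- exact: subspace_metrisable.
- exact: subset_refl.
- move=> u u_in cu.
  have [y conv] := complete_cauchy_seq_converges compO (cauchy_seq_subspace linB.1 cu).
  exists y; first exact: (order_interval_closed VL LS u_in conv).
  apply: (seq_converges_subspace _ conv) => n.
  exact: (order_interval_sub_band_gen VL le0x (u_in n)).
Qed.
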